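(* For every $n\in\mathbb{N}$, \begin{align*} \sum_{j=0}^{n}\sum_{i=0}^{j}\frac{\binom{n+1}{i}}{\binom{n}{j}}(-1)^j&=\frac{n+1}{2n+4}\left(1+(-1)^n\big(2^{n+2}-1\big)\right),\\ \sum_{j=0}^{n}\sum_{i=0}^{j}\frac{\binom{2n+1}{i}}{\binom{2n}{j}}(-1)^j&=\frac{(-1)^n\,2^{2n-1}}{\binom{2n}{n}}+\frac{2n+1}{n+1}\cdot\frac{(-1)^n+1}{4}. \end{align*} *)

From HB Require Import structures.
From mathcomp Require Import all_boot all_order all_algebra.
Set Implicit Arguments. Unset Strict Implicit. Unset Printing Implicit Defensive.

(* Let S(N, k) be the partial double sum over j <= k with terms C(N+1, i) / C(N, j).
   The identity 1/C(N, k) = (N+1)/(N+2) (1/C(N+1, k) + 1/C(N+1, k+1)) lets an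
   induction on k express S(N, k) through the partial row sum
   sum_(i <= k) C(N+1, i) and 1/C(N+1, k+1) alone.  For k = N that row sum is
   2^(N+1) - 1; for N = 2n and k = n it is half of row 2n+1, i.e. 2^(2n), by the
   symmetry of binomial coefficients. *)

From HB Require Import structures.
From mathcomp Require Import all_boot all_order all_algebra.
From mathcomp Require Import zify ring.
Import Order.TTheory GRing.Theory Num.Theory.

Lemma sum_bin n : \sum_(0 <= i < n.+1) 'C(n, i) = 2 ^ n.
Proof.
rewrite big_mkord -[2]/(1 + 1) expnDn.
by apply: eq_bigr => i _; rewrite !exp1n !muln1.
Qed.

Lemma sum_bin_odd_half n : \sum_(0 <= i < n.+1) 'C((2 * n).+1, i) = 2 ^ (2 * n).
Proof.
have halves : 2 * \sum_(0 <= i < n.+1) 'C((2 * n).+1, i)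
              = \sum_(0 <= i < (2 * n).+2) 'C((2 * n).+1, i).
  have -> : (2 * n).+2 = n.+1 + n.+1 by lia.
  rewrite !big_mkord big_split_ord /= mul2n -addnn; congr (_ + _).
  rewrite (reindex_inj rev_ord_inj) /=; apply: eq_bigr => i _.
  have := ltn_ord i => lt_i_n.
  by rewrite -bin_sub; [congr 'C(_, _) | ]; lia.
by apply/eqP; rewrite -(eqn_pmul2l (_ : 0 < 2)) // -expnS halves sum_bin.
Qed.

Local Open Scope ring_scope.

Section BinomialRatios.

Variable R : numFieldType.

Lemma invr_bin_split (N k : nat) : (k <= N)%N ->
  (('C(N, k))%:R : R)^-1
    = N.+1%:R / N.+2%:R * (('C(N.+1, k))%:R^-1 + ('C(N.+1, k.+1))%:R^-1).
Proof.
move=> le_k_N.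
set a : R := ('C(N, k))%:R.
have a_neq0 : a != 0 by rewrite pnatr_eq0 -lt0n bin_gt0.
have inv_down : ('C(N.+1, k))%:R^-1 = (N.+1 - k)%:R / (N.+1%:R * a) :> R.
  have down : (N.+1 - k)%:R * ('C(N.+1, k))%:R = N.+1%:R * a :> R.
    by rewrite -!natrM -mul_bin_down.
  by rewrite -down invfM mulrA divff ?mul1r // pnatr_eq0 subn_eq0 -ltnNge ltnS.
have inv_diag : ('C(N.+1, k.+1))%:R^-1 = k.+1%:R / (N.+1%:R * a) :> R.
  have diag : k.+1%:R * ('C(N.+1, k.+1))%:R = N.+1%:R * a :> R.
    by rewrite -!natrM -mul_bin_diag.
  by rewrite -diag invfM mulrA divff ?mul1r // pnatr_eq0.
have sum_weights : (N.+1 - k)%:R + k.+1%:R = N.+2%:R :> R.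
  by rewrite -natrD; congr _%:R; lia.
rewrite inv_down inv_diag -mulrDl sum_weights.
by field; rewrite a_neq0 nat1r -[2 + _]natrD !(@pnatr_eq0 R).
Qed.

Lemma alt_sum_bin_ratio (N k : nat) : (k <= N)%N ->
  \sum_(0 <= j < k.+1) \sum_(0 <= i < j.+1)
      ('C(N.+1, i))%:R / ('C(N, j))%:R * (-1) ^+ j
  = N.+1%:R / N.+2%:R * ((-1) ^+ k * (\sum_(0 <= i < k.+1) ('C(N.+1, i))%:R)
        / ('C(N.+1, k.+1))%:R + (1 + (-1) ^+ k) / 2) :> R.
Proof.
elim: k => [|k IHk] le_k_N.
  rewrite !big_nat1 !bin0 bin1 expr0 invr1 !mul1r.
  by field; rewrite nat1r -[2 + _]natrD !(@pnatr_eq0 R).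
rewrite big_nat_recr //= IHk ?(ltnW le_k_N) // -!big_distrl /=.
rewrite [\sum_(0 <= i < k.+2) _]big_nat_recr //= (@invr_bin_split N k.+1) //.
have b_neq0 : ('C(N.+1, k.+1))%:R != 0 :> R by rewrite pnatr_eq0 -lt0n bin_gt0; lia.
have c_neq0 : ('C(N.+1, k.+2))%:R != 0 :> R by rewrite pnatr_eq0 -lt0n bin_gt0; lia.
by rewrite exprS; field; rewrite b_neq0 c_neq0 -[2 + _]natrD (@pnatr_eq0 R).
Qed.

Lemma alt_sum_bin_ratio_full (n : nat) :
  \sum_(0 <= j < n.+1) \sum_(0 <= i < j.+1)
      ('C(n.+1, i))%:R / ('C(n, j))%:R * (-1) ^+ j
  = (n.+1)%:R / (2 * n + 4)%:R * (1 + (-1) ^+ n * (2 ^+ n.+2 - 1)) :> R.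
Proof.
have row_sum : \sum_(0 <= i < n.+1) ('C(n.+1, i))%:R = 2 ^+ n.+1 - 1 :> R.
  apply/eqP; rewrite eq_sym subr_eq -natr_sum -natrX -sum_bin.
  by rewrite big_nat_recr //= binn natrD.
have -> : (2 * n + 4)%:R = 2 * n.+2%:R :> R by rewrite -natrM; congr _%:R; lia.
rewrite alt_sum_bin_ratio // binn row_sum !exprS.
by field; rewrite -[2 + _]natrD (@pnatr_eq0 R).
Qed.

Lemma alt_sum_bin_ratio_half (n : nat) :
  \sum_(0 <= j < n.+1) \sum_(0 <= i < j.+1)
      ('C((2 * n).+1, i))%:R / ('C(2 * n, j))%:R * (-1) ^+ j
  = (-1) ^+ n * (2 ^+ (2 * n) / 2) / ('C(2 * n, n))%:R
      + ((2 * n).+1)%:R / (n.+1)%:R * (((-1) ^+ n + 1) / 4) :> R.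
Proof.
set a : R := ('C(2 * n, n))%:R.
have a_neq0 : a != 0 by rewrite pnatr_eq0 -lt0n bin_gt0; lia.
have n1_neq0 : n.+1%:R != 0 :> R by rewrite pnatr_eq0.
have central : ('C((2 * n).+1, n.+1))%:R = ((2 * n).+1)%:R * a / n.+1%:R :> R.
  by rewrite -natrM mul_bin_diag natrM mulrAC divff ?mul1r.
rewrite alt_sum_bin_ratio ?leq_pmull // -natr_sum sum_bin_odd_half natrX central.
have -> : ((2 * n).+2)%:R = 2 * n.+1%:R :> R by rewrite -natrM; congr _%:R; lia.
by field; rewrite a_neq0 -[2 * _]natrM !nat1r !(@pnatr_eq0 R).
Qed.

End BinomialRatios.

Theorem mainTheorem13 (n : nat) :
  (\sum_(0 <= j < n.+1) \sum_(0 <= i < j.+1)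
      ('C(n.+1, i))%:R / ('C(n, j))%:R * (-1) ^+ j : rat)
    = (n.+1)%:R / (2 * n + 4)%:R * (1 + (-1) ^+ n * (2 ^+ n.+2 - 1))
  /\
  (\sum_(0 <= j < n.+1) \sum_(0 <= i < j.+1)
      ('C((2 * n).+1, i))%:R / ('C(2 * n, j))%:R * (-1) ^+ j : rat)
    = (-1) ^+ n * (2 ^+ (2 * n) / 2) / ('C(2 * n, n))%:R
      + ((2 * n).+1)%:R / (n.+1)%:R * (((-1) ^+ n + 1) / 4).
Proof.
by split; [exact: alt_sum_bin_ratio_full | exact: alt_sum_bin_ratio_half].
Qed.
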